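(* VD and BC satisfy ballot monotonicity. For each $f\in\{\mathrm{MF},\mathrm{MS},\mathrm{FT}\}$ ballot monotonicity fails: there exist a finite candidate set $C$, a profile $P$, an axis $\triangleleft\in f(P)$ and a ballot $A\in P$ that is not an interval of $\triangleleft$ such that $\triangleleft\notin f(P')$, where $P'$ is obtained from $P$ by replacing (one copy of) $A$ with $A'=\{x\in C:\exists y,z\in A,\ y\trianglelefteq x\trianglelefteq z\}$.
   Context: Let $C$ be a finite set of candidates. An approval ballot is a nonempty subset $A\subseteq C$; a profile is a finite sequence of ballots. An axis is a strict linear order $\triangleleft$ on $C$; $a\trianglelefteq b$ means $a\triangleleft b$ or $a=b$. A ballot $A$ is an interval of $\triangleleft$ if for all $a,b\in A$ and every $c$ with $a\triangleleft c\triangleleft b$ we have $c\in A$. An axis rule $f$ satisfies ballot monotonicity if for every profile $P$, every ballot $A\in P$ and every axis $\triangleleft\in f(P)$ such that $A$ is not an interval of $\triangleleft$, we have $\triangleleft\in f(P')$, where $P'$ is obtained from $P$ by replacing $A$ by $A'=\{x\in C:\exists y,z\in A \text{ with } y\trianglelefteq x\trianglelefteq z\}$. For a cost function $\mathrm{cost}_f$, the scoring rule returns $f(P)=\arg\min_{\triangleleft}\sum_{A\in P}\mathrm{cost}_f(A,\triangleleft)$ over all axes on $C$. The five rules are the scoring rules with costs: $\mathrm{cost}_{\mathrm{VD}}(A,\triangleleft)=0$ if $A$ is an interval of $\triangleleft$ and $1$ otherwise; $\mathrm{cost}_{\mathrm{MF}}(A,\triangleleft)=\min_{x,y\in A,\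 x\trianglelefteq y}\big(|\{z\in A: z\triangleleft x \text{ or } y\triangleleft z\}|+|\{z\notin A: x\triangleleft z\triangleleft y\}|\big)$; $\mathrm{cost}_{\mathrm{BC}}(A,\triangleleft)=|\{b\notin A: a\triangleleft b\triangleleft c \text{ for some } a,c\in A\}|$; $\mathrm{cost}_{\mathrm{MS}}(A,\triangleleft)=\sum_{x\in C\setminus A}\min\big(|\{y\in A:y\triangleleft x\}|,\,|\{y\in A:x\triangleleft y\}|\big)$; $\mathrm{cost}_{\mathrm{FT}}(A,\triangleleft)=\sum_{x\in C\setminus A}|\{y\in A:y\triangleleft x\}|\cdot|\{y\in A:x\triangleleft y\}|$. *)

From mathcomp Require Import all_boot.
Set Implicit Arguments. Unset Strict Implicit. Unset Printing Implicit Defensive.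

(* Candidates: a finite type C.  An axis is a strict linear order [lt : rel C]
   ("a <| b" is [lt a b]).  A ballot is a set of candidates, a profile a
   finite sequence of ballots (all nonempty). *)

Definition is_axis (C : finType) (lt : rel C) : Prop :=
  (forall a, ~~ lt a a) /\
  (forall a b c, lt a b -> lt b c -> lt a c) /\
  (forall a b, a != b -> lt a b || lt b a).

Definition axle (C : finType) (lt : rel C) (a b : C) : bool := lt a b || (a == b).

Definition is_interval (C : finType) (lt : rel C) (A : {set C}) : bool :=
  [forall a in A, forall b in A, forall c, (lt a c && lt c b) ==> (c \in A)].

Definition hull (C : finType) (lt : rel C) (A : {set C}) : {set C} :=
  [set x | [exists y in A, exists z in A, axle lt y x && axle lt x z]].

Definition valid_profile (C : finType) (P : seq {set C}) : bool :=
  all (fun A => A != set0) P.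

Definition costfun := forall C : finType, rel C -> {set C} -> nat.

Definition total_cost (cost : costfun) (C : finType) (P : seq {set C}) (lt : rel C) : nat :=
  \sum_(A <- P) cost C lt A.

Definition in_rule (cost : costfun) (C : finType) (P : seq {set C}) (lt : rel C) : Prop :=
  is_axis lt /\
  (forall lt' : rel C, is_axis lt' -> total_cost cost P lt <= total_cost cost P lt').

Definition cost_VD : costfun := fun C lt A => if is_interval lt A then 0 else 1.

(* min over x,y in A with x <|= y; the identity #|C| of minn is never the
   result when A is nonempty (each candidate value is <= #|C| anyway). *)
Definition cost_MF : costfun := fun C lt A =>
  \big[minn/#|C|]_(x in A) \big[minn/#|C|]_(y in A | axle lt x y)
     (#|[set z in A | lt z x || lt y z]| + #|[set z | (z \notin A) && (lt x z && lt z y)]|).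

Definition cost_BC : costfun := fun C lt A =>
  #|[set b | (b \notin A) && [exists a in A, exists c in A, lt a b && lt b c]]|.

Definition cost_MS : costfun := fun C lt A =>
  \sum_(x in ~: A) minn #|[set y in A | lt y x]| #|[set y in A | lt x y]|.

Definition cost_FT : costfun := fun C lt A =>
  \sum_(x in ~: A) #|[set y in A | lt y x]| * #|[set y in A | lt x y]|.

Definition ballot_monotone (cost : costfun) : Prop :=
  forall (C : finType) (P : seq {set C}), valid_profile P ->
  forall (i : nat), i < size P ->
  forall lt : rel C, in_rule cost P lt ->
  ~~ is_interval lt (nth set0 P i) ->
  in_rule cost (set_nth set0 P i (hull lt (nth set0 P i))) lt.

Definition monotonicity_counterexample (cost : costfun) : Prop :=
  exists (C : finType) (P : seq {set C}) (i : nat) (lt : rel C),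
    [/\ valid_profile P, i < size P, in_rule cost P lt,
        ~~ is_interval lt (nth set0 P i) &
        ~ in_rule cost (set_nth set0 P i (hull lt (nth set0 P i))) lt].

(* VD and BC: replacing a ballot A that is not an interval of the winning
   axis by its hull H lowers the cost under that axis by exactly as much as it
   can raise the cost under any other axis: by 1 for VD (H is an interval), and
   by #|H :\: A| for BC (H has no gap, and every gap of A under another axis is
   a gap of H or a point of H :\: A).  For MF, MS and FT there are profiles on
   five candidates where the axis 0 < 1 < 2 < 3 < 4 wins before the
   replacement but not after; optimality is checked by enumerating all 120
   axes, each represented by a permutation of the candidates. *)
From mathcomp Require Import all_boot zify.
From Stdlib Require Import FunctionalExtensionality.
Set Implicit Arguments. Unset Strict Implicit. Unset Printing Implicit Defensive.

Lemma sum_set_nth (T : Type) (f : T -> nat) (x0 : T) (P : seq T) i y :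
  i < size P ->
  \sum_(A <- set_nth x0 P i y) f A + f (nth x0 P i) = \sum_(A <- P) f A + f y.
Proof.
elim: P i => [|a P IH] [|i] //= ltiP; rewrite !big_cons; first lia.
by rewrite -addnA IH //; lia.
Qed.

Lemma set_nth_map (T U : Type) (f : T -> U) (x0 : T) (y0 : U) s i y :
  i < size s -> set_nth y0 (map f s) i (f y) = map f (set_nth x0 s i y).
Proof. by elim: s i => [|a s IH] [|i] //= /IH ->. Qed.

Section Hull.
Variables (C : finType) (lt : rel C).

Lemma mem_hull (A : {set C}) x : x \in A -> x \in hull lt A.
Proof.
move=> xA; rewrite inE; apply/existsP; exists x; rewrite xA /=.
by apply/existsP; exists x; rewrite xA /axle eqxx !orbT.
Qed.

Hypothesis lt_axis : is_axis lt.

Lemma hull_convex (A : {set C}) a b c : a \in hull lt A -> b \in hull lt A ->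
  lt a c -> lt c b -> c \in hull lt A.
Proof.
case: lt_axis => _ [lt_trans _].
rewrite !inE => /existsP[y /andP[yA /existsP[_ /andP[_ /andP[ya _]]]]].
move=> /existsP[_ /andP[_ /existsP[z /andP[zA /andP[_ bz]]]]] ac cb.
apply/existsP; exists y; rewrite yA /=; apply/existsP; exists z; rewrite zA /= /axle.
apply/andP; split; apply/orP; left.
- by case/orP: ya => [ya|/eqP->] //; apply: lt_trans ya ac.
- by case/orP: bz => [bz|/eqP<-] //; apply: lt_trans cb bz.
Qed.

Lemma is_interval_hull (A : {set C}) : is_interval lt (hull lt A).
Proof.
apply/forallP => a; apply/implyP => aH; apply/forallP => b; apply/implyP => bH.
by apply/forallP => c; apply/implyP => /andP[ac cb]; apply: hull_convex aH bH ac cb.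
Qed.

End Hull.

Lemma ballot_monotone_exchange (cost : costfun) :
  (forall (C : finType) (lt lt' : rel C) (A : {set C}),
     is_axis lt -> is_axis lt' -> ~~ is_interval lt A ->
     cost C lt (hull lt A) + cost C lt' A <= cost C lt A + cost C lt' (hull lt A)) ->
  ballot_monotone cost.
Proof.
move=> exchange C P _ i ltiP lt [lt_axis lt_min] notI; split=> // lt' lt'_axis.
have := exchange C lt lt' _ lt_axis lt'_axis notI.
have := sum_set_nth (cost C lt) set0 (hull lt (nth set0 P i)) ltiP.
have := sum_set_nth (cost C lt') set0 (hull lt (nth set0 P i)) ltiP.
have := lt_min lt' lt'_axis; rewrite /total_cost; lia.
Qed.

Lemma ballot_monotone_VD : ballot_monotone cost_VD.
Proof.
apply: ballot_monotone_exchange => C lt lt' A lt_axis _ notI.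
by rewrite /cost_VD is_interval_hull // (negbTE notI); case: ifP.
Qed.

Section BetweennessCost.
Variables (C : finType) (lt : rel C).

Lemma cost_BC_hullD (A : {set C}) : cost_BC lt A = #|hull lt A :\: A|.
Proof.
rewrite /cost_BC; apply: eq_card => b; rewrite !inE.
case bA: (b \in A) => //=; apply/existsP/existsP.
- case=> a /andP[aA /existsP[c /andP[cA /andP[ab bc]]]].
  by exists a; rewrite aA; apply/existsP; exists c; rewrite cA /axle ab bc.
- case=> a /andP[aA /existsP[c /andP[cA]]]; rewrite /axle.
  have [eq_ab|_] := eqVneq a b; first by rewrite -eq_ab aA in bA.
  have [eq_bc|_] := eqVneq b c; first by rewrite eq_bc cA in bA.
  by rewrite !orbF => abc; exists a; rewrite aA; apply/existsP; exists c; rewrite cA.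
Qed.

Lemma cost_BC_hull (A : {set C}) : is_axis lt -> cost_BC lt (hull lt A) = 0.
Proof.
move=> lt_axis; apply/eqP; rewrite cards_eq0; apply/eqP/setP => b; rewrite in_set in_set0.
apply/negbTE/andP => -[bH /existsP[a /andP[aH /existsP[c /andP[cH /andP[ab bc]]]]]].
by have := hull_convex lt_axis aH cH ab bc; rewrite (negbTE bH).
Qed.

Lemma cost_BC_le_hull (lt' : rel C) (A : {set C}) :
  cost_BC lt' A <= cost_BC lt' (hull lt A) + #|hull lt A :\: A|.
Proof.
apply: leq_trans (leq_card_setU _ _); apply: subset_leq_card.
apply/subsetP => b; rewrite inE => /andP[bA /existsP[a /andP[aA abc]]].
rewrite in_setU in_setD bA /=; case bH: (b \in hull lt A); rewrite ?orbT // orbF.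
rewrite inE bH /=; apply/existsP; exists a; rewrite mem_hull //=.
by case/existsP: abc => c /andP[cA bc]; apply/existsP; exists c; rewrite mem_hull.
Qed.

End BetweennessCost.

Lemma ballot_monotone_BC : ballot_monotone cost_BC.
Proof.
apply: ballot_monotone_exchange => C lt lt' A lt_axis _ _.
by rewrite cost_BC_hull // (cost_BC_hullD lt) add0n addnC cost_BC_le_hull.
Qed.

(* Profiles on ['I_n] given by lists of naturals, so that their costs compute. *)
Definition ord_set n (A : seq nat) : {set 'I_n} := [set x : 'I_n | val x \in A].

Definition ord_rel n (R : rel nat) : rel 'I_n := fun a b => R a b.

Arguments ord_set : clear implicits.
Arguments ord_rel : clear implicits.

(* Candidate [i] sits at position [nth 0 s i] of the axis. *)
Definition rank_rel (s : seq nat) : rel nat := fun i j => nth 0 s i < nth 0 s j.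

Section AxisRank.
Variables (C : finType) (lt : rel C).

Definition axis_rank x := #|[set y | lt y x]|.

Hypothesis lt_axis : is_axis lt.

Lemma axis_rankE a b : lt a b = (axis_rank a < axis_rank b).
Proof.
case: lt_axis => irr [lt_trans total].
have rank_mono c d : lt c d -> axis_rank c < axis_rank d.
  move=> cd; apply: proper_card; apply/properP; split.
    by apply/subsetP => y; rewrite !inE => yc; apply: lt_trans yc cd.
  by exists c; rewrite !inE ?cd ?(negbTE (irr c)).
apply/idP/idP => [|ab]; first exact: rank_mono.
have [eq_ab|ne_ab] := eqVneq a b; first by rewrite eq_ab ltnn in ab.
case/orP: (total a b ne_ab) => // /rank_mono ba.
by have := ltn_trans ab ba; rewrite ltnn.
Qed.

Lemma axis_rank_inj : injective axis_rank.
Proof.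
move=> a b eq_ab; apply/eqP; apply: contraT => ne_ab.
by case: lt_axis => _ [_ total]; case/orP: (total a b ne_ab); rewrite axis_rankE eq_ab ltnn.
Qed.

Lemma axis_rank_lt_card a : axis_rank a < #|C|.
Proof.
rewrite -cardsT; apply: proper_card; rewrite properT.
by apply/eqP => full; case: lt_axis => irr _; have := in_setT a; rewrite -full inE (negbTE (irr a)).
Qed.

End AxisRank.

Lemma is_axis_ord_rel n (f : nat -> nat) :
  {in gtn n &, injective f} -> is_axis (ord_rel n (fun i j => f i < f j)).
Proof.
move=> f_inj; split; first by move=> a; rewrite /ord_rel ltnn.
split; first by move=> a b c; apply: ltn_trans.
move=> a b ne_ab; rewrite /ord_rel -neq_ltn; apply: contra ne_ab => /eqP eq_f.
by apply/eqP/val_inj/f_inj; rewrite ?inE ?ltn_ord.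
Qed.

Lemma axis_ord_rank n (lt : rel 'I_n.+1) : is_axis lt ->
  exists2 s, s \in permutations (iota 0 n.+1) & lt = ord_rel n.+1 (rank_rel s).
Proof.
move=> lt_axis; pose s := [seq axis_rank lt (inord k) | k <- iota 0 n.+1].
have nth_s k : k < n.+1 -> nth 0 s k = axis_rank lt (inord k).
  by move=> ltkn; rewrite (nth_map 0) ?size_iota // nth_iota.
exists s.
  have s_uniq : uniq s.
    rewrite map_inj_in_uniq ?iota_uniq // => i j; rewrite !mem_iota => ltin ltjn.
    move/(axis_rank_inj lt_axis) => eq_ij.
    by rewrite -(inordK ltin) -(inordK ltjn) eq_ij.
  have s_sub : {subset s <= iota 0 n.+1}.
    move=> k /mapP[i _ ->]; rewrite mem_iota /=.
    by have := axis_rank_lt_card lt_axis (inord i); rewrite card_ord.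
  have [_ eq_s] := uniq_min_size s_uniq s_sub (eq_leq (esym (size_map _ _))).
  by rewrite mem_permutations uniq_perm ?iota_uniq.
apply: functional_extensionality => a; apply: functional_extensionality => b.
by rewrite /ord_rel /rank_rel !nth_s ?ltn_ord // !inord_val -axis_rankE.
Qed.

Lemma big_ord_foldr n (op : nat -> nat -> nat) (d : nat) (q : pred nat) (g : nat -> nat)
    (P : pred 'I_n) (F : 'I_n -> nat) :
  (forall x : 'I_n, P x = q x) -> (forall x : 'I_n, q x -> F x = g x) ->
  \big[op/d]_(x | P x) F x = foldr op d [seq g k | k <- iota 0 n & q k].
Proof.
move=> eq_P eq_F; rewrite (eq_bigl (fun x : 'I_n => q x)) //.
rewrite (eq_bigr (fun x : 'I_n => g x)); last by move=> x /eq_F.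
rewrite -(big_mkord q g) /index_iota subn0 -big_filter.
by elim: [seq _ <- _ | _] => [|k r IH]; rewrite ?big_nil ?big_cons //= IH.
Qed.

Lemma card_ord_count n (S : {set 'I_n}) (q : pred nat) :
  (forall x : 'I_n, (x \in S) = q x) -> #|S| = count q (iota 0 n).
Proof.
move=> eq_S; rewrite -sum1_card (@big_ord_foldr n addn 0 q (fun _ => 1)) //.
by elim: (iota 0 n) => //= k r IH; case: (q k); rewrite /= IH.
Qed.

Section NatCosts.
Variables (n : nat) (R : rel nat).

Definition below_nat (A : seq nat) x := count (fun y => (y \in A) && R y x) (iota 0 n).
Definition above_nat (A : seq nat) x := count (fun y => (y \in A) && R x y) (iota 0 n).

Definition cost_MS_nat (A : seq nat) : nat :=
  foldr addn 0 [seq minn (below_nat A x) (above_nat A x) | x <- iota 0 n & x \notin A].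

Definition cost_FT_nat (A : seq nat) : nat :=
  foldr addn 0 [seq below_nat A x * above_nat A x | x <- iota 0 n & x \notin A].

Definition cost_MF_nat (A : seq nat) : nat :=
  foldr minn n [seq foldr minn n
    [seq count (fun z => (z \in A) && (R z x || R y z)) (iota 0 n) +
         count (fun z => (z \notin A) && (R x z && R z y)) (iota 0 n)
    | y <- iota 0 n & (y \in A) && (R x y || (x == y))]
  | x <- iota 0 n & x \in A].

Let ltR := ord_rel n R.

Lemma card_below_ord A x : #|[set y in ord_set n A | ltR y x]| = below_nat A x.
Proof. by apply: card_ord_count => y; rewrite !inE. Qed.

Lemma card_above_ord A x : #|[set y in ord_set n A | ltR x y]| = above_nat A x.
Proof. by apply: card_ord_count => y; rewrite !inE. Qed.

Lemma cost_MS_ord A : cost_MS ltR (ord_set n A) = cost_MS_nat A.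
Proof.
apply: big_ord_foldr => [x|x _]; first by rewrite !inE.
by rewrite card_below_ord card_above_ord.
Qed.

Lemma cost_FT_ord A : cost_FT ltR (ord_set n A) = cost_FT_nat A.
Proof.
apply: big_ord_foldr => [x|x _]; first by rewrite !inE.
by rewrite card_below_ord card_above_ord.
Qed.

Lemma cost_MF_ord A : cost_MF ltR (ord_set n A) = cost_MF_nat A.
Proof.
rewrite /cost_MF card_ord; apply: big_ord_foldr => [x|x _]; first by rewrite !inE.
apply: big_ord_foldr => [y|y _]; first by rewrite !inE /axle /ltR /ord_rel val_eqE.
by congr addn; apply: card_ord_count => z; rewrite !inE.
Qed.

End NatCosts.

Definition total_cost_nat (cost_nat : rel nat -> seq nat -> nat) R (P : seq (seq nat)) :=
  sumn [seq cost_nat R A | A <- P].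

Lemma valid_profile_ord n (P : seq (seq nat)) :
  all (has (gtn n)) P -> valid_profile [seq ord_set n A | A <- P].
Proof.
elim: P => //= A P IH /andP[/hasP[k kA ltkn] /IH ->]; rewrite andbT.
by apply/set0Pn; exists (Ordinal ltkn); rewrite inE.
Qed.

Lemma hull_ord_set n (A : seq nat) lo hi :
  lo \in A -> hi \in A -> all (fun k => lo <= k <= hi) A -> hi < n ->
  hull (ord_rel n ltn) (ord_set n A) = ord_set n (iota lo (hi - lo).+1).
Proof.
move=> loA hiA /allP A_bnd lthin; have ltlon : lo < n by have := A_bnd _ hiA; lia.
have axleE (a b : 'I_n) : axle (ord_rel n ltn) a b = (val a <= val b).
  by rewrite /axle /ord_rel -val_eqE /=; lia.
apply/setP => x; rewrite [x \in ord_set _ _]inE mem_iota inE; apply/existsP/idP.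
- case=> y /andP[]; rewrite inE => yA /existsP[z /andP[]]; rewrite inE => zA.
  by rewrite !axleE => /andP[yx xz]; have := A_bnd _ yA; have := A_bnd _ zA; lia.
- move=> x_bnd; exists (Ordinal ltlon); rewrite inE loA /=.
  apply/existsP; exists (Ordinal lthin); rewrite inE hiA !axleE /=.
  by have := A_bnd _ loA; case: x x_bnd => x ltxn /=; lia.
Qed.

Lemma not_is_interval_ord_set n (A : seq nat) a b c :
  a < c < b -> b < n -> a \in A -> b \in A -> c \notin A ->
  ~~ is_interval (ord_rel n ltn) (ord_set n A).
Proof.
move=> /andP[ac cb] ltbn aA bA cA.
have ltan : a < n by lia.
have ltcn : c < n by lia.
apply/negP => /forallP/(_ (Ordinal ltan)); rewrite inE aA.
move=> /forallP/(_ (Ordinal ltbn)); rewrite inE bA.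
by move=> /forallP/(_ (Ordinal ltcn)); rewrite /ord_rel /= ac cb inE (negbTE cA).
Qed.

Section OrdCounterexample.
Variables (cost : costfun) (n : nat) (cost_nat : rel nat -> seq nat -> nat).
Hypothesis cost_ord : forall R A, cost (ord_rel n.+1 R) (ord_set n.+1 A) = cost_nat R A.

Lemma total_cost_ord R P :
  total_cost cost [seq ord_set n.+1 A | A <- P] (ord_rel n.+1 R) = total_cost_nat cost_nat R P.
Proof.
rewrite /total_cost big_map.
by elim: P => [|A P IH]; rewrite ?big_nil ?big_cons //= cost_ord IH.
Qed.

Lemma in_rule_ord P R : is_axis (ord_rel n.+1 R) ->
  all (fun s => total_cost_nat cost_nat R P <= total_cost_nat cost_nat (rank_rel s) P)
      (permutations (iota 0 n.+1)) ->
  in_rule cost [seq ord_set n.+1 A | A <- P] (ord_rel n.+1 R).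
Proof.
move=> R_axis /allP R_min; split => // lt' /axis_ord_rank[s s_perm ->].
by rewrite !total_cost_ord; apply: R_min.
Qed.

Lemma not_in_rule_ord P R s : uniq s -> size s = n.+1 ->
  total_cost_nat cost_nat (rank_rel s) P < total_cost_nat cost_nat R P ->
  ~ in_rule cost [seq ord_set n.+1 A | A <- P] (ord_rel n.+1 R).
Proof.
move=> s_uniq s_size s_better [_ /(_ (ord_rel n.+1 (rank_rel s)))].
rewrite !total_cost_ord leqNgt s_better => /(_ _)/notF; apply.
apply: is_axis_ord_rel => i j; rewrite !inE -s_size => lti ltj /eqP.
by rewrite nth_uniq // => /eqP.
Qed.

Lemma counterexample_ord P i A' s :
  ~~ is_interval (ord_rel n.+1 ltn) (ord_set n.+1 (nth [::] P i)) ->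
  hull (ord_rel n.+1 ltn) (ord_set n.+1 (nth [::] P i)) = ord_set n.+1 A' ->
  all (has (gtn n.+1)) P -> i < size P ->
  all (fun s => total_cost_nat cost_nat ltn P <= total_cost_nat cost_nat (rank_rel s) P)
      (permutations (iota 0 n.+1)) ->
  uniq s -> size s = n.+1 ->
  total_cost_nat cost_nat (rank_rel s) (set_nth [::] P i A') <
    total_cost_nat cost_nat ltn (set_nth [::] P i A') ->
  monotonicity_counterexample cost.
Proof.
move=> notI hullE P_valid ltiP ltn_min s_uniq s_size s_better.
exists ('I_n.+1 : finType), [seq ord_set n.+1 A | A <- P], i, (ord_rel n.+1 ltn).
rewrite size_map (nth_map [::]) // hullE (set_nth_map _ [::]) //; split => //.
- exact: valid_profile_ord.
- by apply: in_rule_ord => //; apply: (@is_axis_ord_rel _ id) => ? ? _ _.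
- exact: not_in_rule_ord s_better.
Qed.

End OrdCounterexample.

Lemma monotonicity_counterexample_MF : monotonicity_counterexample cost_MF.
Proof.
apply: (@counterexample_ord cost_MF 4 (cost_MF_nat 5) (cost_MF_ord 5)
  [:: [:: 1; 2]; [:: 3; 4]; [:: 0; 1; 4]; [:: 0; 2; 3]] 2 (iota 0 5) [:: 2; 0; 1; 3; 4]).
- exact: (@not_is_interval_ord_set _ _ 1 4 2).
- exact: (@hull_ord_set 5 _ 0 4).
all: by vm_compute.
Qed.

Lemma monotonicity_counterexample_MS : monotonicity_counterexample cost_MS.
Proof.
apply: (@counterexample_ord cost_MS 4 (cost_MS_nat 5) (cost_MS_ord 5)
  [:: [:: 0; 1; 2]; [:: 0; 2; 3; 4]; [:: 1; 3; 4]] 1 (iota 0 5) [:: 0; 2; 1; 3; 4]).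
- exact: (@not_is_interval_ord_set _ _ 0 2 1).
- exact: (@hull_ord_set 5 _ 0 4).
all: by vm_compute.
Qed.

Lemma monotonicity_counterexample_FT : monotonicity_counterexample cost_FT.
Proof.
apply: (@counterexample_ord cost_FT 4 (cost_FT_nat 5) (cost_FT_ord 5)
  [:: [:: 0; 2; 3; 4]; [:: 0; 1; 2; 3]; [:: 0; 1; 4]; [:: 1; 2; 3; 4]] 0 (iota 0 5)
  [:: 0; 2; 3; 4; 1]).
- exact: (@not_is_interval_ord_set _ _ 0 2 1).
- exact: (@hull_ord_set 5 _ 0 4).
all: by vm_compute.
Qed.

Theorem mainTheorem6 :
  [/\ ballot_monotone cost_VD, ballot_monotone cost_BC,
      monotonicity_counterexample cost_MF,
      monotonicity_counterexample cost_MS &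
      monotonicity_counterexample cost_FT].
Proof.
split.
- exact: ballot_monotone_VD.
- exact: ballot_monotone_BC.
- exact: monotonicity_counterexample_MF.
- exact: monotonicity_counterexample_MS.
- exact: monotonicity_counterexample_FT.
Qed.
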